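(* There exist a tight $7$-point simplex and a tight $8$-point simplex in $G(2,4)$.
   Context: $G(2,4)$ is the space of $2$-dimensional linear subspaces of $\mathbb{R}^4$, each identified with its orthogonal projection matrix. A tight $N$-point simplex in $G(m,n)$ is a set of $N$ distinct subspaces with projection matrices $\Pi_1,\dots,\Pi_N$ such that $\operatorname{tr}(\Pi_i\Pi_j)=\frac{m(Nm-n)}{n(N-1)}$ for all $i\ne j$; for $(m,n)=(2,4)$ this value is $\frac{N-2}{N-1}$. *)

From HB Require Import structures.
From mathcomp Require Import all_boot all_order all_algebra.
From mathcomp Require Import Rstruct.
From Stdlib Require Import Reals.
Set Implicit Arguments. Unset Strict Implicit. Unset Printing Implicit Defensive.
Import Order.TTheory GRing.Theory Num.Theory.
Local Open Scope ring_scope.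

(* An element of the Grassmannian G(m,n): an m-dimensional linear subspace of
   R^n, identified with its orthogonal projection matrix, i.e. a symmetric
   idempotent n x n real matrix of rank m. *)
Definition grassmannian (m n : nat) (P : 'M[R]_n) : Prop :=
  P^T = P /\ P *m P = P /\ \rank P = m.

Definition tight_value (m n N : nat) : R :=
  (m%:R * (N%:R * m%:R - n%:R)) / (n%:R * (N%:R - 1)).

Definition tight_simplex (m n N : nat) (Pi : 'I_N -> 'M[R]_n) : Prop :=
  injective Pi /\
  (forall i, grassmannian m (Pi i)) /\
  (forall i j, i != j -> \tr (Pi i *m Pi j) = tight_value m n N).

Arguments tight_simplex m n N Pi : clear implicits.

(* Identify R^4 with the quaternions.  For unit pure quaternions a and b the
   map x |-> a x b is a symmetric involution, so P(a,b) = (1 + L_a R_b)/2 is an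
   orthogonal projection of trace 2, hence of rank 2.  Since
   L_a L_c = L_(a x c) - a.c and R_b R_d = R_(d x b) - b.d with L_u, R_v and
   L_u R_v traceless, tr(P(a,b) P(c,d)) = 1 + (a.c)(b.d).  So N pairs of unit
   vectors of R^3 with (a_i.a_j)(b_i.b_j) = -1/(N-1) for i <> j give a tight
   N-point simplex in G(2,4).
   For N = 7 put t_i = 2 pi i / 7, a_i = (cos t_i, sin t_i, 0) and
   b_i = (sqrt(2/3) cos 3t_i, sqrt(2/3) sin 3t_i, sqrt(1/3)): the condition
   becomes the Gauss period identity cos t + cos 2t + cos 4t = -1/2 for every
   nonzero multiple t of 2 pi / 7.  For N = 8 the coordinates are the square
   roots of the roots X, Y of 7t^2 - 6t + 1 and of 1 - X, 1 - Y. *)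

From HB Require Import structures.
From mathcomp Require Import all_boot all_order all_algebra.
From mathcomp Require Import Rstruct.
From Stdlib Require Import Reals.
From mathcomp Require Import ring lra zify.
Set Implicit Arguments. Unset Strict Implicit. Unset Printing Implicit Defensive.
Import Order.TTheory GRing.Theory Num.Theory.
Local Open Scope ring_scope.
Bind Scope ring_scope with R.

Section Quaternions.
Variable F : comNzRingType.
Implicit Types a b c d : F * F * F.

Definition dot3 a b := a.1.1 * b.1.1 + a.1.2 * b.1.2 + a.2 * b.2.

Lemma dot3C a b : dot3 a b = dot3 b a.
Proof. by rewrite /dot3; ring. Qed.

Definition cross3 a b : F * F * F :=
  (a.1.2 * b.2 - a.2 * b.1.2, a.2 * b.1.1 - a.1.1 * b.2, a.1.1 * b.1.2 - a.1.2 * b.1.1).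

(* The matrices of x |-> a x and x |-> x b on the quaternions, in the basis
   1, i, j, k, for the pure quaternions a = a1 i + a2 j + a3 k and b. *)
Definition qmulL a : 'M[F]_4 :=
  let a1 := a.1.1 in let a2 := a.1.2 in let a3 := a.2 in
  \matrix_(i, j) nth 0 (nth [::] [:: [:: 0; -a1; -a2; -a3]; [:: a1; 0; -a3; a2];
                                     [:: a2; a3; 0; -a1]; [:: a3; -a2; a1; 0]] i) j.

Definition qmulR b : 'M[F]_4 :=
  let b1 := b.1.1 in let b2 := b.1.2 in let b3 := b.2 in
  \matrix_(i, j) nth 0 (nth [::] [:: [:: 0; -b1; -b2; -b3]; [:: b1; 0; b3; -b2];
                                     [:: b2; -b3; 0; b1]; [:: b3; b2; -b1; 0]] i) j.

Ltac mx4_entrywise := apply/matrixP => -[[|[|[|[|i]]]] ?] // -[[|[|[|[|j]]]] ?] //;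
  rewrite ?mxE ?big_ord_recr ?big_ord0 /= ?mxE /=.

Lemma tr_qmulL a : (qmulL a)^T = - qmulL a.
Proof. case: a => [[a1 a2] a3]; mx4_entrywise; ring. Qed.

Lemma tr_qmulR b : (qmulR b)^T = - qmulR b.
Proof. case: b => [[b1 b2] b3]; mx4_entrywise; ring. Qed.

Lemma qmulLR_comm a b : qmulL a *m qmulR b = qmulR b *m qmulL a.
Proof. case: a b => [[a1 a2] a3] [[b1 b2] b3]; mx4_entrywise; ring. Qed.

Lemma qmulL_mul a c : qmulL a *m qmulL c = qmulL (cross3 a c) - (dot3 a c)%:M.
Proof. case: a c => [[a1 a2] a3] [[c1 c2] c3]; rewrite /cross3 /dot3 /=; mx4_entrywise; ring. Qed.

Lemma qmulR_mul b d : qmulR b *m qmulR d = qmulR (cross3 d b) - (dot3 b d)%:M.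
Proof. case: b d => [[b1 b2] b3] [[d1 d2] d3]; rewrite /cross3 /dot3 /=; mx4_entrywise; ring. Qed.

Lemma mxtrace_qmulL a : \tr (qmulL a) = 0.
Proof. case: a => [[a1 a2] a3]; rewrite /mxtrace !big_ord_recr !big_ord0 /= !mxE /=; ring. Qed.

Lemma mxtrace_qmulR b : \tr (qmulR b) = 0.
Proof. case: b => [[b1 b2] b3]; rewrite /mxtrace !big_ord_recr !big_ord0 /= !mxE /=; ring. Qed.

Lemma mxtrace_qmulLR a b : \tr (qmulL a *m qmulR b) = 0.
Proof.
case: a b => [[a1 a2] a3] [[b1 b2] b3].
rewrite /mxtrace !big_ord_recr !big_ord0 /= !mxE !big_ord_recr !big_ord0 /= !mxE /=; ring.
Qed.

Lemma qmulL_sqr a : qmulL a *m qmulL a = - (dot3 a a)%:M.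
Proof. case: a => [[a1 a2] a3]; rewrite /dot3 /=; mx4_entrywise; ring. Qed.

Lemma qmulR_sqr b : qmulR b *m qmulR b = - (dot3 b b)%:M.
Proof. case: b => [[b1 b2] b3]; rewrite /dot3 /=; mx4_entrywise; ring. Qed.

Lemma qmulLR_mul a b c d :
  qmulL a *m qmulR b *m (qmulL c *m qmulR d) = qmulL a *m qmulL c *m (qmulR b *m qmulR d).
Proof. by rewrite !mulmxA -[_ *m qmulR b *m _]mulmxA -qmulLR_comm !mulmxA. Qed.

Lemma mxtrace_qmulLR_mul a b c d :
  \tr (qmulL a *m qmulR b *m (qmulL c *m qmulR d)) = 4 * (dot3 a c * dot3 b d).
Proof.
rewrite qmulLR_mul qmulL_mul qmulR_mul mulmxBl !mulmxBr mul_mx_scalar !mul_scalar_mx.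
rewrite !linearB !linearZ /= mxtrace_qmulLR mxtrace_qmulL mxtrace_qmulR mxtrace_scalar.
by rewrite -mulr_natr; ring.
Qed.

End Quaternions.

Lemma mxtrace_pid_mx (F : nzRingType) n r : \tr (pid_mx r : 'M[F]_n) = (minn r n)%:R.
Proof.
rewrite /mxtrace; under eq_bigr do rewrite mxE eqxx /=.
elim: n => [|n IHn]; first by rewrite big_ord0 minn0.
rewrite big_ord_recr /= IHn -natrD; congr _%:R.
case: (ltnP n r) => /= h; lia.
Qed.

Lemma mxtrace_idem (F : fieldType) n (P : 'M[F]_n) : P *m P = P -> \tr P = (\rank P)%:R.
Proof.
move=> idP; set r : nat := \rank P; set L := col_ebase P; set U := row_ebase P.
have uL : L \in unitmx := col_ebase_unit P.
have uU : U \in unitmx := row_ebase_unit P.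
have eP : L *m pid_mx r *m U = P := mulmx_ebase P.
have idUL : pid_mx r *m (U *m L) *m pid_mx r = pid_mx r :> 'M_n.
  move: (idP); rewrite -eP => /(congr1 (fun X => invmx L *m X *m invmx U)).
  by rewrite !mulmxA mulVmx // mul1mx -!mulmxA !mulmxV // !mulmx1.
rewrite -eP -mulmxA mxtrace_mulC -mulmxA -(@pid_mx_id _ n n n r) ?rank_leq_row //.
by rewrite -mulmxA mxtrace_mulC idUL mxtrace_pid_mx (minn_idPl (rank_leq_row P)).
Qed.

Section PlaneProjection.
Variable F : numFieldType.
Implicit Types a b c d : F * F * F.

Definition plane_proj a b : 'M[F]_4 := 2^-1 *: (1%:M + qmulL a *m qmulR b).

Lemma trmx_plane_proj a b : (plane_proj a b)^T = plane_proj a b.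
Proof.
rewrite /plane_proj linearZ linearD /= trmx1 trmx_mul tr_qmulL tr_qmulR.
by rewrite mulmxN mulNmx opprK qmulLR_comm.
Qed.

Lemma mxtrace_plane_proj a b : \tr (plane_proj a b) = 2.
Proof. by rewrite mxtraceZ mxtraceD mxtrace_qmulLR addr0 mxtrace1; field. Qed.

Lemma mxtrace_plane_proj_mul a b c d :
  \tr (plane_proj a b *m plane_proj c d) = 1 + dot3 a c * dot3 b d.
Proof.
rewrite -scalemxAl -scalemxAr scalerA mxtraceZ mulmxDl !mulmxDr !mul1mx !mulmx1.
by rewrite !mxtraceD mxtrace1 !mxtrace_qmulLR mxtrace_qmulLR_mul; field.
Qed.

Lemma plane_proj_idem a b :
  dot3 a a = 1 -> dot3 b b = 1 -> plane_proj a b *m plane_proj a b = plane_proj a b.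
Proof.
move=> unit_a unit_b.
have M2 : qmulL a *m qmulR b *m (qmulL a *m qmulR b) = 1%:M.
  by rewrite qmulLR_mul qmulL_sqr qmulR_sqr unit_a unit_b mulNmx mulmxN opprK mul1mx.
rewrite -scalemxAl -scalemxAr scalerA mulmxDl !mulmxDr !mul1mx mulmx1 M2.
by rewrite [_ + 1%:M]addrC -mulr2n -scaler_nat scalerA; congr (_ *: _); field.
Qed.

End PlaneProjection.

Lemma plane_proj_grassmannian (a b : R * R * R) :
  dot3 a a = 1 -> dot3 b b = 1 -> grassmannian 2 (plane_proj a b).
Proof.
move=> unit_a unit_b; have idP := plane_proj_idem unit_a unit_b.
split; [exact: trmx_plane_proj | split; first exact: idP].
by apply/eqP; rewrite -(eqr_nat R) -mxtrace_idem // mxtrace_plane_proj.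
Qed.

Lemma tight_value_2_4 (N : nat) : (1 < N)%nat -> tight_value 2 4 N = 1 - (N.-1)%:R^-1.
Proof.
case: N => [|[|N]] // _; rewrite /tight_value -[N.+2%:R]natr1 !RealsE /=; field.
by rewrite addrC natr1 pnatr_eq0.
Qed.

Lemma plane_proj_tight_simplex N (a b : 'I_N -> R * R * R) :
  (forall i, dot3 (a i) (a i) = 1) -> (forall i, dot3 (b i) (b i) = 1) ->
  (forall i j, i != j -> dot3 (a i) (a j) * dot3 (b i) (b j) = - (N.-1)%:R^-1) ->
  tight_simplex 2 4 N (fun i => plane_proj (a i) (b i)).
Proof.
move=> unit_a unit_b dot_ab.
have tr_pair i j : i != j ->
    \tr (plane_proj (a i) (b i) *m plane_proj (a j) (b j)) = 1 - (N.-1)%:R^-1.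
  by move=> nij; rewrite mxtrace_plane_proj_mul dot_ab.
split; last split.
- move=> i j eq_ij; apply/eqP/negPn/negP => nij.
  have := tr_pair i j nij; rewrite -eq_ij plane_proj_idem // mxtrace_plane_proj.
  have : 0 <= (N.-1)%:R^-1 :> R by rewrite invr_ge0.
  lra.
- by move=> i; apply: plane_proj_grassmannian.
- move=> i j nij; rewrite tr_pair // tight_value_2_4 //.
  by move: (ltn_ord i) (ltn_ord j) nij; rewrite -val_eqE /=; lia.
Qed.

Lemma cosB (x y : R) : cos (x - y) = cos x * cos y + sin x * sin y.
Proof. by rewrite cosD cos_neg sin_neg RoppE; ring. Qed.

Lemma sinB (x y : R) : sin (x - y) = sin x * cos y - cos x * sin y.
Proof. by rewrite sinD cos_neg sin_neg RoppE; ring. Qed.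

Definition hept_angle (k : nat) := k%:R * (2 * PI / 7).

Lemma hept_angleB m n : (n <= m)%nat -> hept_angle m - hept_angle n = hept_angle (m - n).
Proof. by move=> le_nm; rewrite /hept_angle natrB //; ring. Qed.

Lemma cos_hept_angle_mod k : cos (hept_angle (k %% 7)) = cos (hept_angle k).
Proof.
rewrite [in RHS](divn_eq k 7) -(cos_period _ (k %/ 7)) !RealsE.
by congr cos; rewrite /hept_angle natrD natrM /=; field.
Qed.

Lemma cos_hept_angle_sub m n : (m + n = 7)%nat -> cos (hept_angle m) = cos (hept_angle n).
Proof.
move=> mn7; have -> : m = (7 - n)%nat by lia.
rewrite -hept_angleB; last by lia.
have -> : hept_angle 7 = 2 * PI by rewrite /hept_angle; field.
by rewrite cosB cos_2PI sin_2PI !RealsE; ring.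
Qed.

Lemma sum_cos_hept_angle :
  cos (hept_angle 1) + cos (hept_angle 2) + cos (hept_angle 3) = - 1 / 2.
Proof.
set u := PI / 7.
have sin_u : 0 < sin u.
  have PI_gt0 : 0 < PI by apply/RltP; exact: PI_RGT_0.
  by apply/RltP; apply: sin_gt_0; apply/RltP; rewrite /u ?R0E; lra.
have telescope x y z : x + u = y -> x - u = z -> 2 * cos x * sin u = sin y - sin z.
  by move=> <- <-; rewrite sinD sinB; ring.
have e1 : 2 * cos (hept_angle 1) * sin u = sin (3 * u) - sin u.
  by apply: telescope; rewrite /hept_angle /u; field.
have e2 : 2 * cos (hept_angle 2) * sin u = sin (5 * u) - sin (3 * u).
  by apply: telescope; rewrite /hept_angle /u; field.
have e3 : 2 * cos (hept_angle 3) * sin u = - sin (5 * u).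
  by rewrite (telescope _ PI (5 * u)) ?sin_PI ?R0E ?sub0r // /hept_angle /u; field.
have : (2 * (cos (hept_angle 1) + cos (hept_angle 2) + cos (hept_angle 3)) + 1) * sin u = 0.
  by lra.
by move/eqP; rewrite mulf_eq0 (gt_eqF sin_u) orbF => /eqP; lra.
Qed.

Lemma cos_hept_gauss_period k : (k %% 7 != 0)%nat ->
  cos (hept_angle k) + cos (hept_angle (2 * k)) + cos (hept_angle (4 * k)) = - 1 / 2.
Proof.
rewrite -(cos_hept_angle_mod (2 * k)) -(cos_hept_angle_mod (4 * k)) -(cos_hept_angle_mod k).
rewrite -modnMmr -(modnMmr 4) -sum_cos_hept_angle.
have : (k %% 7 < 7)%nat by rewrite ltn_mod.
case: (k %% 7)%nat => [|[|[|[|[|[|[|r]]]]]]] // _ _; rewrite /modn /=.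
all: rewrite ?(@cos_hept_angle_sub 4 3 erefl) ?(@cos_hept_angle_sub 5 2 erefl).
all: rewrite ?(@cos_hept_angle_sub 6 1 erefl); ring.
Qed.

Lemma hept_pair_prod m : (m %% 7 != 0)%nat ->
  cos (hept_angle m) * (2 / 3 * cos (hept_angle (3 * m)) + 1 / 3) = - 1 / 6.
Proof.
move=> m_ndvd; have := cos_hept_gauss_period m_ndvd.
have -> : hept_angle (4 * m) = hept_angle (3 * m) + hept_angle m.
  by rewrite /hept_angle !natrM; ring.
have -> : hept_angle (2 * m) = hept_angle (3 * m) - hept_angle m.
  by rewrite /hept_angle !natrM; ring.
rewrite cosB cosD; lra.
Qed.

Definition hept_a (i : 'I_7) : R * R * R :=
  (cos (hept_angle i), sin (hept_angle i), 0).

Definition hept_b (i : 'I_7) : R * R * R :=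
  (Num.sqrt (2 / 3) * cos (hept_angle (3 * i)), Num.sqrt (2 / 3) * sin (hept_angle (3 * i)),
   Num.sqrt (1 / 3)).

Lemma dot3_hept_a i j : dot3 (hept_a i) (hept_a j) = cos (hept_angle i - hept_angle j).
Proof. by rewrite cosB /dot3 /=; ring. Qed.

Lemma dot3_hept_b i j : dot3 (hept_b i) (hept_b j)
  = 2 / 3 * cos (hept_angle (3 * i) - hept_angle (3 * j)) + 1 / 3.
Proof.
have s_sq : Num.sqrt (2 / 3) ^+ 2 = 2 / 3 :> R by rewrite sqr_sqrtr //; lra.
have h_sq : Num.sqrt (1 / 3) ^+ 2 = 1 / 3 :> R by rewrite sqr_sqrtr //; lra.
by rewrite cosB -[in RHS]s_sq -[in RHS]h_sq /dot3 /=; ring.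
Qed.

Lemma exists_tight_simplex7 : exists Pi : 'I_7 -> 'M[R]_4, tight_simplex 2 4 _ Pi.
Proof.
exists (fun i => plane_proj (hept_a i) (hept_b i)); apply: plane_proj_tight_simplex.
- by move=> i; rewrite dot3_hept_a subrr cos_0.
- by move=> i; rewrite dot3_hept_b subrr cos_0 R1E; field.
move=> i j; wlog lt_ji : i j / (j < i)%nat => [hwlog nij | _].
  case: (ltngtP i j) => [lt_ij | lt_ji | eq_ij]; last by move: nij; rewrite (val_inj eq_ij) eqxx.
  - by rewrite dot3C [dot3 (hept_b i) _]dot3C hwlog // eq_sym.
  - exact: hwlog.
have le_ji := ltnW lt_ji.
have le3 : (3 * j <= 3 * i)%nat by rewrite leq_mul2l le_ji orbT.
rewrite dot3_hept_a dot3_hept_b (hept_angleB le_ji) (hept_angleB le3) -mulnBr.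
rewrite hept_pair_prod ?modn_small ?mulN1r //.
- by rewrite subn_eq0 -ltnNge.
- exact: leq_ltn_trans (leq_subr j i) (ltn_ord i).
Qed.

Definition oct_X : R := (3 - Num.sqrt 2) / 7.
Definition oct_Y : R := (3 + Num.sqrt 2) / 7.

Lemma oct_XY : 0 <= oct_X <= 1 /\ 0 <= oct_Y <= 1 /\
  oct_X + oct_Y = 6 / 7 /\ oct_X * oct_Y = 1 / 7.
Proof.
have sqrt2_sq : Num.sqrt 2 ^+ 2 = 2 :> R by rewrite sqr_sqrtr.
have sqrt2_ge0 : 0 <= Num.sqrt 2 :> R by rewrite sqrtr_ge0.
have sqrt2_le : Num.sqrt 2 <= 3 / 2 :> R by nra.
by rewrite /oct_X /oct_Y; (repeat split); try apply/andP; try split; nra.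
Qed.

Definition oct_x := Num.sqrt oct_X.
Definition oct_y := Num.sqrt oct_Y.
Definition oct_x' := Num.sqrt (1 - oct_X).
Definition oct_y' := Num.sqrt (1 - oct_Y).

Definition oct_a (i : 'I_8) : R * R * R :=
  match val i with
  | 0 => (0, oct_x', oct_x) | 1 => (0, - oct_y', - oct_y)
  | 2 => (oct_x', 0, oct_x) | 3 => (0, oct_y', - oct_y)
  | 4 => (- oct_y', 0, - oct_y) | 5 => (oct_y', 0, - oct_y)
  | 6 => (oct_x', 0, - oct_x) | _ => (0, oct_x', - oct_x) end.

Definition oct_b (i : 'I_8) : R * R * R :=
  match val i with
  | 0 => (oct_y', 0, - oct_y) | 1 => (oct_x', 0, oct_x)
  | 2 => (0, - oct_y', oct_y) | 3 => (- oct_x', 0, oct_x)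
  | 4 => (0, - oct_x', - oct_x) | 5 => (0, oct_x', - oct_x)
  | 6 => (0, - oct_y', - oct_y) | _ => (oct_y', 0, oct_y) end.

Lemma exists_tight_simplex8 : exists Pi : 'I_8 -> 'M[R]_4, tight_simplex 2 4 _ Pi.
Proof.
have [/andP[X_ge0 X_le1] [/andP[Y_ge0 Y_le1] [XpY XY]]] := oct_XY.
have x_sq : oct_x ^+ 2 = oct_X by rewrite sqr_sqrtr.
have y_sq : oct_y ^+ 2 = oct_Y by rewrite sqr_sqrtr.
have x'_sq : oct_x' ^+ 2 = 1 - oct_X by rewrite sqr_sqrtr // subr_ge0.
have y'_sq : oct_y' ^+ 2 = 1 - oct_Y by rewrite sqr_sqrtr // subr_ge0.
have xy : oct_x ^+ 2 * oct_y ^+ 2 = 1 / 7 by rewrite x_sq y_sq.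
have x'y' : oct_x' ^+ 2 * oct_y' ^+ 2 = 2 / 7 by rewrite x'_sq y'_sq; nra.
have x'y : oct_x' ^+ 2 * oct_y ^+ 2 = oct_Y - 1 / 7 by rewrite x'_sq y_sq; nra.
have xy' : oct_x ^+ 2 * oct_y' ^+ 2 = oct_X - 1 / 7 by rewrite x_sq y'_sq; nra.
exists (fun i => plane_proj (oct_a i) (oct_b i)); apply: plane_proj_tight_simplex.
- by case=> [[|[|[|[|[|[|[|[|i]]]]]]]] Hi] //; rewrite /oct_a /dot3 /=; lra.
- by case=> [[|[|[|[|[|[|[|[|i]]]]]]]] Hi] //; rewrite /oct_b /dot3 /=; lra.
- case=> [[|[|[|[|[|[|[|[|i]]]]]]]] Hi] //; case=> [[|[|[|[|[|[|[|[|j]]]]]]]] Hj] //;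
  rewrite /oct_a /oct_b /dot3 /= => _; lra.
Qed.

Theorem theorem6p8 :
  (exists Pi : 'I_7 -> 'M[R]_4, tight_simplex 2 4 _ Pi) /\
  (exists Pi : 'I_8 -> 'M[R]_4, tight_simplex 2 4 _ Pi).
Proof. split; [exact: exists_tight_simplex7 | exact: exists_tight_simplex8]. Qed.
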